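(* Let $X$ be a compact metric space with metric $d$ and let $f\colon X\to X$ be a continuous map. If $f$ has the contractive shadowing property, then $f$ has the h-shadowing property.
   Context: For $\delta>0$, a sequence $(x_i)_{i\ge0}$ in $X$ is a $\delta$-pseudo orbit of $f$ if $d(f(x_i),x_{i+1})\le\delta$ for all $i\ge0$; it is $\epsilon$-shadowed by $x\in X$ if $d(f^i(x),x_i)\le\epsilon$ for all $i\ge0$. For $L>0$, $f$ has the $L$-Lipschitz shadowing property if there is $\delta_0>0$ such that for every $0<\delta\le\delta_0$, every $\delta$-pseudo orbit of $f$ is $L\delta$-shadowed by some point of $X$. $f$ has the contractive shadowing property if it has the $L$-Lipschitz shadowing property for some $0<L<1$. A finite sequence $(x_i)_{i=0}^k$ ($k\ge1$) is a $\delta$-chain of $f$ if $d(f(x_i),x_{i+1})\le\delta$ for $0\le i\le k-1$. $f$ has the h-shadowing property if for every $\epsilon>0$ there is $\delta>0$ such that for every $\delta$-chain $(x_i)_{i=0}^k$ of $f$ there is $x\in X$ with $d(f^i(x),x_i)\le\epsilon$ for all $0\le i\le k-1$ and $f^k(x)=x_k$. *)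

From HB Require Import structures.
From mathcomp Require Import all_boot all_order all_algebra.
From mathcomp Require Import all_classical all_reals all_analysis.
Set Implicit Arguments. Unset Strict Implicit. Unset Printing Implicit Defensive.
Import Order.TTheory GRing.Theory Num.Theory.
Local Open Scope ring_scope.

Section Shadowing.
Context {R : realType} {X : metricType R}.

Local Notation d := (@mdist R X).

Definition pseudo_orbit (f : X -> X) (delta : R) (xs : nat -> X) : Prop :=
  forall i : nat, d (f (xs i)) (xs i.+1) <= delta.

Definition shadowed_by (f : X -> X) (eps : R) (xs : nat -> X) (x : X) : Prop :=
  forall i : nat, d (iter i f x) (xs i) <= eps.

Definition Lipschitz_shadowing (f : X -> X) (L : R) : Prop :=
  exists2 delta0 : R, 0 < delta0 &
    forall delta : R, 0 < delta -> delta <= delta0 ->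
      forall xs : nat -> X, pseudo_orbit f delta xs ->
        exists x : X, shadowed_by f (L * delta) xs x.

Definition contractive_shadowing (f : X -> X) : Prop :=
  exists L : R, [/\ 0 < L, L < 1 & Lipschitz_shadowing f L].

(* delta-chain (x_0, ..., x_k), k >= 1, represented by a sequence on [0, k] *)
Definition delta_chain (f : X -> X) (delta : R) (xs : nat -> X) (k : nat) : Prop :=
  (1 <= k)%N /\ forall i : nat, (i < k)%N -> d (f (xs i)) (xs i.+1) <= delta.

Definition h_shadowing (f : X -> X) : Prop :=
  forall eps : R, 0 < eps -> exists2 delta : R, 0 < delta &
    forall (xs : nat -> X) (k : nat), delta_chain f delta xs k ->
      exists x : X, (forall i : nat, (i < k)%N -> d (iter i f x) (xs i) <= eps)
                    /\ iter k f x = xs k.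

End Shadowing.

From HB Require Import structures.
From mathcomp Require Import all_boot all_order all_algebra.
From mathcomp Require Import all_classical all_reals all_analysis.
From mathcomp Require Import ring lra zify.
Set Implicit Arguments. Unset Strict Implicit. Unset Printing Implicit Defensive.
Import Order.TTheory GRing.Theory Num.Theory numFieldTopology.Exports.
Local Open Scope ring_scope.
Local Open Scope classical_set_scope.

(* Fix a delta-chain (x_0, ..., x_k) and let g(y) = d(f^k y, x_k).  Among the
   points y with g(y) <= delta and (1 - L) d(f^i y, x_i) + L g(y) <= L delta
   for i < k (a compact set, nonempty by shadowing the chain), pick one
   minimising g.  If g(y) > 0, the chain (y, f y, ..., f^(k-1) y, x_k) is a
   g(y)-chain; shadowing it gives a point of the same set with g at most
   L g(y) < g(y).  Hence the minimum is 0, i.e. f^k y = x_k, and then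
   (1 - L) d(f^i y, x_i) <= L delta <= (1 - L) eps for delta small. *)

Section iterates.
Context {T : topologicalType}.

Lemma continuous_iter (f : T -> T) (n : nat) : continuous f -> continuous (iter n f).
Proof.
move=> fc; elim: n => [|n IHn] x /=; first exact: cvg_id.
exact: (continuous_comp (IHn x) (fc _)).
Qed.

End iterates.

Section metric_continuity.
Context {R : realType} {X : metricType R}.
Local Notation d := (@mdist R X).

Lemma continuous_mdistl (c : X) : continuous (fun y : X => d y c).
Proof.
move=> y; apply/cvgrPdist_lt => e e0.
have near_y : \forall t \near y, d y t < e.
  exact: (@metricType_numDomainType.cvgr_dist_lt _ _ _ _ _ id y cvg_id _ e0).
near=> t; have yt : d y t < e by near: t.
have := metric_triangle y t c; have := metric_triangle t y c.
rewrite (metric_sym t y) ltr_distlC => ? ?; apply/andP; split; lra.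
Unshelve. all: end_near. Qed.

End metric_continuity.

Section shadowing.
Context {R : realType} {X : metricType R}.
Local Notation d := (@mdist R X).
Variables (f : X -> X) (L delta0 : R).
Hypothesis shadow : forall delta, 0 < delta -> delta <= delta0 ->
  forall xs, pseudo_orbit f delta xs -> exists x, shadowed_by f (L * delta) xs x.

Lemma chain_shadowed (delta : R) (xs : nat -> X) (k : nat) :
  0 < delta -> delta <= delta0 ->
  (forall i, (i < k)%N -> d (f (xs i)) (xs i.+1) <= delta) ->
  exists y, forall i, (i <= k)%N -> d (iter i f y) (xs i) <= L * delta.
Proof.
move=> delta_gt0 delta_le chain.
pose p i := if (i <= k)%N then xs i else iter (i - k) f (xs k).
have p_tail i : (k <= i)%N -> p i = iter (i - k) f (xs k).
  move=> ki; rewrite /p; case: (leqP i k) => // ik.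
  have -> : i = k by lia.
  by rewrite subnn.
have [y shadow_p] : exists y, shadowed_by f (L * delta) p y.
  apply: shadow => // i; case: (ltnP i k) => ik.
  - by rewrite /p (ltnW ik) ik chain.
  - rewrite !p_tail; [|lia|lia].
    have -> : (i.+1 - k = (i - k).+1)%N by lia.
    by rewrite mdistxx ltW.
by exists y => i ik; have := shadow_p i; rewrite /p ik.
Qed.

Lemma orbit_retarget (y z : X) (k : nat) :
  0 < d (iter k f y) z -> d (iter k f y) z <= delta0 ->
  exists y', (forall i, (i < k)%N -> d (iter i f y') (iter i f y) <= L * d (iter k f y) z)
          /\ d (iter k f y') z <= L * d (iter k f y) z.
Proof.
set t := d _ z => t_gt0 t_le.
pose p i := if (i < k)%N then iter i f y else z.
have [y' shadow_p] : exists y', forall i, (i <= k)%N -> d (iter i f y') (p i) <= L * t.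
  apply: chain_shadowed => // i ik; rewrite /p ik.
  case: ltnP => [_|ki]; first by rewrite mdistxx ltW.
  have ek : k = i.+1 by lia.
  by rewrite /t ek.
exists y'; split=> [i ik|]; first by have := shadow_p i (ltnW ik); rewrite /p ik.
by have := shadow_p k (leqnn k); rewrite /p ltnn.
Qed.

Lemma continuous_mdist_iter (n : nat) (c : X) :
  continuous f -> continuous (fun y => d (iter n f y) c).
Proof.
move=> fc y; apply: (@continuous_comp _ _ _ (iter n f) (fun z => d z c)).
- exact: continuous_iter.
- exact: continuous_mdistl.
Qed.

Hypotheses (L_ge0 : 0 <= L) (L_lt1 : L < 1).
Variables (xs : nat -> X) (k : nat) (delta : R).

Definition end_gap (y : X) : R := d (iter k f y) (xs k).

Definition admissible : set X :=
  [set y | end_gap y <= delta] `&` \bigcap_(i in [set i | (i < k)%N])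
    [set y | (1 - L) * d (iter i f y) (xs i) + L * end_gap y <= L * delta].

Lemma admissible_closed : continuous f -> closed admissible.
Proof.
move=> fc; have gc : continuous end_gap := @continuous_mdist_iter k (xs k) fc.
apply: closedI.
  by have := @preimage_closed _ _ end_gap _ (fun y _ => gc y) (@closed_le _ delta).
apply: closed_bigI => i _; apply: (preimage_closed _ (@closed_le _ (L * delta))) => y _.
apply: cvgD; apply: cvgM; try exact: cvg_cst; last exact: gc.
exact: continuous_mdist_iter.
Qed.

Lemma admissible_neq0 :
  0 < delta -> delta <= delta0 ->
  (forall i, (i < k)%N -> d (f (xs i)) (xs i.+1) <= delta) -> admissible !=set0.
Proof.
move=> delta_gt0 delta_le chain.
have [y shadow_y] := chain_shadowed delta_gt0 delta_le chain.
have gap_le : end_gap y <= L * delta := shadow_y k (leqnn k).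
have Ldelta_le : L * delta <= delta by rewrite ler_piMl // ltW.
exists y; split=> [|i /= ik]; first exact: le_trans gap_le Ldelta_le.
have dist_le := shadow_y i (ltnW ik).
have : (1 - L) * d (iter i f y) (xs i) <= (1 - L) * (L * delta).
  by rewrite ler_wpM2l // subr_ge0 ltW.
have : L * end_gap y <= L * (L * delta) by rewrite ler_wpM2l.
lra.
Qed.

Lemma admissible_contract (y : X) :
  delta <= delta0 -> admissible y -> 0 < end_gap y ->
  exists2 y', admissible y' & end_gap y' <= L * end_gap y.
Proof.
move=> delta_le [gap_le Jy] gap_gt0.
have [y' [close_orbit gap'_le]] := orbit_retarget gap_gt0 (le_trans gap_le delta_le).
exists y'; last exact: gap'_le.
split=> [|i /= ik].
  by apply: le_trans gap'_le (le_trans _ gap_le); rewrite ler_piMl // ltW.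
have orbit_le : (1 - L) * d (iter i f y') (xs i) <=
                (1 - L) * (L * end_gap y + d (iter i f y) (xs i)).
  apply: ler_wpM2l; first by rewrite subr_ge0 ltW.
  apply: le_trans (metric_triangle _ (iter i f y) _) _.
  by rewrite lerD2r close_orbit.
have gap'_le' : L * end_gap y' <= L * (L * end_gap y) by rewrite ler_wpM2l.
apply: le_trans (lerD orbit_le gap'_le') _.
have -> : (1 - L) * (L * end_gap y + d (iter i f y) (xs i)) + L * (L * end_gap y)
        = (1 - L) * d (iter i f y) (xs i) + L * end_gap y by ring.
exact: Jy.
Qed.

Lemma admissible_end_gap0 :
  compact [set: X] -> continuous f -> 0 < delta -> delta <= delta0 ->
  (forall i, (i < k)%N -> d (f (xs i)) (xs i.+1) <= delta) ->
  exists2 c, admissible c & end_gap c = 0.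
Proof.
move=> cX fc delta_gt0 delta_le chain.
have J_compact : compact admissible.
  exact: subclosed_compact (admissible_closed fc) cX (subsetT _).
have [c /set_mem Jc c_min] := compact_EVT_min (admissible_neq0 delta_gt0 delta_le chain)
  J_compact (continuous_subspaceT (@continuous_mdist_iter k (xs k) fc)).
exists c => //; apply/eqP; rewrite eq_le mdist_ge0 andbT leNgt; apply/negP => gap_gt0.
have [y' Jy' gap'_le] := admissible_contract delta_le Jc gap_gt0.
have := c_min y' (mem_set Jy'); rewrite leNgt => /negP; apply.
by apply: le_lt_trans gap'_le _; rewrite gtr_pMl.
Qed.

End shadowing.

Theorem theorem1p1 (R : realType) (X : metricType R) (f : X -> X) :
  compact [set: X] -> continuous f ->
  contractive_shadowing f -> h_shadowing f.
Proof.
move=> cX fc [L [L_gt0 L_lt1 [delta0 delta0_gt0 shadow]]] eps eps_gt0.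
set delta := Num.min delta0 (eps * (1 - L)).
have delta_gt0 : 0 < delta by rewrite lt_min delta0_gt0 mulr_gt0 // subr_gt0.
have delta_le0 : delta <= delta0 by rewrite ge_min lexx.
have delta_le_eps : delta <= eps * (1 - L) by rewrite ge_min lexx orbT.
exists delta => // xs k [_ chain].
have [c [_ Jc] gap0] :=
  admissible_end_gap0 shadow (ltW L_gt0) L_lt1 cX fc delta_gt0 delta_le0 chain.
exists c; split; last exact: mdist_positivity gap0.
move=> i ik; have := Jc i ik; rewrite /= gap0 mulr0 addr0 => dist_le.
have L1_gt0 : 0 < 1 - L by rewrite subr_gt0.
rewrite -(ler_pM2l L1_gt0) (le_trans dist_le) // [_ * eps]mulrC.
by apply: le_trans delta_le_eps; rewrite ler_piMl // ltW.
Qed.
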